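(* Let $A(x)=-(x-\frac13)^2$ on $[0,1]$, with the two maps $\tau_1(x)=x/2$ and $\tau_2(x)=(x+1)/2$ (the inverse branches of $T(x)=2x \pmod 1$). Let $V_1(x)=\frac{10}{63}-\frac{2x}{21}-\frac{x^2}{3}$, $V_2(x)=\frac{5}{63}+\frac{2x}{7}-\frac{x^2}{3}$, $V_3(x)=\frac{10x}{21}-\frac{x^2}{3}$, $V_4(x)=-\frac{5}{63}+\frac{4x}{7}-\frac{x^2}{3}$, and $V(x)=\max\{V_1(x),V_2(x),V_3(x),V_4(x)\}$. Then $m(A)=-\frac{2}{63}$ and $V$ is a calibrated subaction for $A$, i.e. for every $x\in[0,1]$, $$V(x)=\max\{A(\tau_1(x))+V(\tau_1(x)),\,A(\tau_2(x))+V(\tau_2(x))\}-m(A).$$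
   Context: $m(A)$ denotes the supremum of $\int A\,d\rho$ over probabilities $\rho$ invariant for $T(x)=2x\pmod 1$. A calibrated subaction (in this non-periodic setting on $[0,1]$) is a continuous $V:[0,1]\to\mathbb{R}$ with $V(x)=\max_{i\in\{1,2\}}[A(\tau_i(x))+V(\tau_i(x))]-m(A)$ for all $x\in[0,1]$. *)

From HB Require Import structures.
From mathcomp Require Import all_boot all_order all_algebra.
From mathcomp Require Import all_classical all_reals all_analysis.
Set Implicit Arguments. Unset Strict Implicit. Unset Printing Implicit Defensive.
Import Order.TTheory GRing.Theory Num.Theory.
Import numFieldNormedType.Exports.
Local Open Scope classical_set_scope.
Local Open Scope ring_scope.

Definition doubling (R : realType) (x : R) : R := 2 * x - (Num.floor (2 * x))%:~R.

Definition tau1 (R : realType) (x : R) : R := x / 2.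
Definition tau2 (R : realType) (x : R) : R := (x + 1) / 2.

Definition T_invariant_prob (R : realType) (mu : probability R R) : Prop :=
  mu `[0%R, 1%R]%classic = 1%E /\
  forall B : set R, measurable B ->
    mu (doubling (R:=R) @^-1` B `&` `[0%R, 1%R]%classic) = mu (B `&` `[0%R, 1%R]%classic).

Definition m_erg (R : realType) (A : R -> R) : \bar R :=
  ereal_sup [set (\int[mu]_(x in `[0%R, 1%R]%classic) (A x)%:E)%E
            | mu in [set mu : probability R R | T_invariant_prob mu]].

Definition calibrated_subaction (R : realType) (A V : R -> R) : Prop :=
  {within `[0%R, 1%R]%classic, continuous V} /\
  forall x : R, x \in `[0, 1] ->
    V x = Num.max (A (tau1 x) + V (tau1 x)) (A (tau2 x) + V (tau2 x))
          - fine (m_erg A).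

Definition A0 (R : realType) (x : R) : R := - (x - 3^-1) ^+ 2.
Definition V1 (R : realType) (x : R) : R := 10 / 63 - 2 * x / 21 - x ^+ 2 / 3.
Definition V2 (R : realType) (x : R) : R := 5 / 63 + 2 * x / 7 - x ^+ 2 / 3.
Definition V3 (R : realType) (x : R) : R := 10 * x / 21 - x ^+ 2 / 3.
Definition V4 (R : realType) (x : R) : R := - (5 / 63) + 4 * x / 7 - x ^+ 2 / 3.
Definition V0 (R : realType) (x : R) : R :=
  Num.max (Num.max (V1 x) (V2 x)) (Num.max (V3 x) (V4 x)).

From HB Require Import structures.
From mathcomp Require Import all_boot all_order all_algebra.
From mathcomp Require Import all_classical all_reals all_analysis.
From mathcomp Require Import ring lra measurable_realfun.
Set Implicit Arguments.
Unset Strict Implicit.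
Unset Printing Implicit Defensive.
Import Order.TTheory GRing.Theory Num.Theory.
Import numFieldNormedType.Exports.
Local Open Scope classical_set_scope.
Local Open Scope ring_scope.

(* The bound m(A) <= -2/63 is the subaction argument: calibration gives
   A + V + 2/63 <= V o T on [0, 1], and integrating against a T-invariant
   probability, for which V o T and V have the same integral, yields
   \int A <= -2/63.  The bound is attained by the uniform probability on the
   periodic orbit 1/7 -> 2/7 -> 4/7. *)

Section doubling.
Variable R : realType.
Implicit Types x y : R.
Local Notation I01 := `[0%R : R, 1%R]%classic.

Lemma doubling_ge0 x : 0 <= doubling x.
Proof. by rewrite /doubling subr_ge0 Num.Theory.floor_le. Qed.

Lemma doubling_lt1 x : doubling x < 1.
Proof. by rewrite /doubling ltrBlDl -intrD1 lt_succ_floor. Qed.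

Lemma doubling_itv01 x : I01 (doubling x).
Proof. by rewrite /= in_itv /= doubling_ge0 ltW ?doubling_lt1. Qed.

Lemma doublingE_small x : 0 <= x < 2^-1 -> doubling x = 2 * x.
Proof.
move=> /andP[x0 x2]; rewrite /doubling.
suff -> : Num.floor (2 * x) = 0 by rewrite subr0.
by apply/floor_def; rewrite /=; apply/andP; split; lra.
Qed.

Lemma doublingE_large x : 2^-1 <= x < 1 -> doubling x = 2 * x - 1.
Proof.
move=> /andP[x0 x2]; rewrite /doubling.
suff -> : Num.floor (2 * x) = 1 by [].
by apply/floor_def; rewrite intrD /=; apply/andP; split; lra.
Qed.

Lemma doubling1 : doubling (1 : R) = 0.
Proof.
rewrite /doubling mulr1 (_ : Num.floor (2 : R) = 2) ?subrr //.
by apply/floor_def; rewrite intrD /=; apply/andP; split; lra.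
Qed.

Lemma measurable_doubling : measurable_fun setT (@doubling R).
Proof.
apply: (measurable_funB (f := fun x => 2 * x) (g := fun x => (Num.floor (2 * x))%:~R)).
  exact: mulrl_measurable.
apply: nondecreasing_measurable => // y z yz.
by rewrite ler_int le_floor // ler_pM2l.
Qed.

Lemma calibrated_le_doubling (A V : R -> R) (m : R) :
  (forall y, 0 <= y <= 1 ->
     V y = Num.max (A (tau1 y) + V (tau1 y)) (A (tau2 y) + V (tau2 y)) - m) ->
  forall x, 0 <= x < 1 -> A x + V x - m <= V (doubling x).
Proof.
move=> calV x /andP[x0 x1].
rewrite [V (doubling x)]calV; last by rewrite doubling_ge0 ltW ?doubling_lt1.
rewrite lerD2r le_max.
have [xs|xl] := ltrP x 2^-1.
  rewrite doublingE_small ?x0 // (_ : tau1 (2 * x) = x) ?lexx //.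
  by rewrite /tau1; field.
rewrite doublingE_large ?xl // (_ : tau2 (2 * x - 1) = x) ?lexx ?orbT //.
by rewrite /tau2; field.
Qed.

End doubling.

Lemma continuous_compact_integrable_finite (R : realType)
    (mu : {finite_measure set R -> \bar R}) (A : set R) (f : R -> R) :
  compact A -> {within A, continuous f} -> mu.-integrable A (EFin \o f).
Proof.
move=> cA cf; have mA := compact_measurable cA.
apply: measurable_bounded_integrable => //.
- by rewrite ltey_eq fin_num_measure.
- exact: subspace_continuous_measurable_fun.
- have /compact_bounded[M [_ boundM]] := continuous_compact cf cA.
  by exists M; split; rewrite ?num_real // => ? ? ? ?; exact: boundM.
Qed.

Section invariant_measure.
Local Open Scope ereal_scope.
Variables (R : realType) (mu : probability R R).
Hypothesis mu_inv : T_invariant_prob mu.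
Local Notation I01 := `[0%R : R, 1%R]%classic.

Let mI01 : measurable I01 := measurable_itv _.

Lemma invariant_prob_itvC : mu (~` I01) = 0.
Proof.
have muT : mu setT = 1 := probability_setT mu.
rewrite -setTD measureD //= ?muT ?ltry //.
have -> : setT `&` I01 = I01 by apply: setTI.
by rewrite mu_inv.1 subee.
Qed.

Lemma invariant_prob_setI_itv (S : set R) : measurable S -> mu (S `&` I01) = mu S.
Proof.
move=> mS; rewrite [RHS](measureDI mu mS mI01) [X in X + _](_ : _ = 0) ?add0e //.
apply: subset_measure0 invariant_prob_itvC => //.
- exact: measurableD.
- exact: measurableC.
Qed.

(* [T_invariant_prob] only constrains traces on [0, 1], which carry all the
   mass. *)
Lemma invariant_prob_preimage (B : set R) : measurable B ->
  mu (@doubling R @^-1` B) = mu B.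
Proof.
move=> mB; rewrite -invariant_prob_setI_itv ?mu_inv.2 ?invariant_prob_setI_itv //.
by rewrite -[_ @^-1` _]setTI; apply: measurable_doubling.
Qed.

Lemma ge0_integral_doubling (f : R -> \bar R) : measurable_fun setT f ->
  (forall x, I01 x -> 0 <= f x) ->
  \int[mu]_(x in I01) f (doubling x) = \int[mu]_(x in I01) f x.
Proof.
move=> mf f0.
have preT : @doubling R @^-1` I01 = setT.
  by apply/seteqP; split => // x _; apply: doubling_itv01.
transitivity (\int[mu]_(x in @doubling R @^-1` I01) (f \o @doubling R) x).
  rewrite preT [RHS](ge0_negligible_integral _ _ _ _ invariant_prob_itvC) //.
  - by rewrite setTD setCK.
  - exact: measurableC.
  - by apply: measurableT_comp; [exact: mf | exact: measurable_doubling].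
  - by move=> x _; apply/f0/doubling_itv01.
rewrite -(ge0_integral_pushforward (@measurable_doubling R)) //; last 2 first.
- exact: measurable_funS mf.
- by move=> x /[!inE] /f0.
apply: eq_measure_integral => [|mT B mB _]; first exact: measurable_doubling.
exact: invariant_prob_preimage.
Qed.

Lemma integrable_doubling (f : R -> R) : measurable_fun setT f ->
  mu.-integrable I01 (EFin \o f) -> mu.-integrable I01 (EFin \o f \o @doubling R).
Proof.
move=> mf /integrableP[_ fint]; apply/integrableP; split.
  apply: measurable_funTS; apply: measurableT_comp; last exact: measurable_doubling.
  exact/measurable_EFinP.
rewrite (ge0_integral_doubling (f := fun y => `|(f y)%:E|)) //.
exact/measurableT_comp/measurable_EFinP.
Qed.

Lemma integral_doubling (f : R -> R) : measurable_fun setT f ->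
  \int[mu]_(x in I01) (f (doubling x))%:E = \int[mu]_(x in I01) (f x)%:E.
Proof.
move=> mf; have mEf : measurable_fun setT (EFin \o f) by exact/measurable_EFinP.
rewrite integralE [RHS]integralE.
have -> : (fun x => (f (doubling x))%:E) = (EFin \o f) \o @doubling R by [].
rewrite funepos_comp funeneg_comp; congr (_ - _).
- by apply: ge0_integral_doubling => //; exact: measurable_funepos.
- by apply: ge0_integral_doubling => //; exact: measurable_funeneg.
Qed.

Lemma integral_le_of_subaction (A V : R -> R) (c : R) :
  continuous A -> continuous V ->
  (forall x, I01 x -> A x + V x + c <= V (doubling x))%R ->
  \int[mu]_(x in I01) (A x)%:E <= (- c)%:E.
Proof.
move=> cA cV subV.
have intC f : continuous f -> mu.-integrable I01 (EFin \o f).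
  move=> cf; apply: continuous_compact_integrable_finite.
    exact: segment_compact.
  exact: continuous_subspaceT.
have mV := continuous_measurable_fun cV.
have iA := intC _ cA; have iV := intC _ cV; have iVT := integrable_doubling mV iV.
have : \int[mu]_(x in I01) ((A x)%:E + c%:E) <=
       \int[mu]_(x in I01) ((V (doubling x))%:E - (V x)%:E).
  apply: le_integral => //.
  - by apply: integrableD => //; exact: finite_measure_integrable_cst.
  - exact: integrableB.
  - by move=> x /[!inE] /subV subVx; rewrite -EFinD -EFinB lee_fin; lra.
rewrite integralD //; last exact: finite_measure_integrable_cst.
rewrite integralB // (integral_doubling (f := V)) // subee; last first.
  exact: integrable_fin_num.
rewrite integral_cst // [X in _ * X](_ : _ = 1) ?mule1; last exact: mu_inv.1.
have : \int[mu]_(x in I01) (A x)%:E \is a fin_num by exact: integrable_fin_num.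
by case: (\int[mu]_(x in I01) (A x)%:E) => // r _; rewrite -EFinD !lee_fin; lra.
Qed.

Lemma integral_le_m_erg (A : R -> R) : \int[mu]_(x in I01) (A x)%:E <= m_erg A.
Proof. by apply: ereal_sup_ubound; exists mu. Qed.

End invariant_measure.

Lemma m_erg_le_of_subaction (R : realType) (A V : R -> R) (c : R) :
  continuous A -> continuous V ->
  (forall x, `[0%R : R, 1%R]%classic x -> A x + V x + c <= V (doubling x)) ->
  (m_erg A <= (- c)%:E)%E.
Proof.
move=> cA cV subV; apply: ge_ereal_sup => _ [mu mu_inv <-].
exact (integral_le_of_subaction mu_inv cA cV subV).
Qed.

Section periodic_orbit_measure.
Variables (R : realType) (n : nat) (a : R).
Local Notation I01 := `[0%R : R, 1%R]%classic.
Local Notation orbit k := (iter k (@doubling R) a).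

(* Period n.+1 rather than n, so that the weight is never the junk 1/0. *)
Definition periodic_orbit_measure :=
  mscale (n.+1%:R^-1 : R)%:nng (msum (fun k => \d_(orbit k)) n.+1).

HB.instance Definition _ := Measure.on periodic_orbit_measure.

Local Open Scope ereal_scope.

Lemma periodic_orbit_measureE (A : set R) : periodic_orbit_measure A =
  (n.+1%:R^-1)%R%:E * \sum_(k < n.+1) \d_(orbit k) A.
Proof. by []. Qed.

Let inv_period_sum1 : (n.+1%:R^-1)%:E * (\sum_(k < n.+1) (1%E : \bar R))%R = 1.
Proof. by rewrite sumEFin -EFinM sumr_const card_ord mulVf. Qed.

Let periodic_orbit_measure_setT : periodic_orbit_measure setT = 1.
Proof.
rewrite periodic_orbit_measureE -[RHS]inv_period_sum1.
by under eq_bigr do rewrite diracT.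
Qed.

HB.instance Definition _ := Measure_isProbability.Build _ _ R
  periodic_orbit_measure periodic_orbit_measure_setT.

Hypothesis a_periodic : orbit n.+1 = a.

Lemma orbit_itv01 k : I01 (orbit k).
Proof. by case: k => [|k] /=; [rewrite -a_periodic|]; apply: doubling_itv01. Qed.

Lemma periodic_orbit_measure_invariant :
  T_invariant_prob periodic_orbit_measure.
Proof.
split.
  rewrite -[LHS]/(periodic_orbit_measure I01) periodic_orbit_measureE.
  rewrite -[RHS]inv_period_sum1.
  by under eq_bigr => k _ do rewrite diracE (mem_set (orbit_itv01 k)).
move=> B mB.
rewrite -[LHS]/(periodic_orbit_measure _) -[RHS]/(periodic_orbit_measure _).
rewrite !periodic_orbit_measureE; congr (_ * _).
have inI k (S : set R) : (orbit k \in S `&` I01) = (orbit k \in S).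
  by rewrite in_setI (mem_set (orbit_itv01 k)) andbT.
under eq_bigr do rewrite diracE inI.
under [RHS]eq_bigr do rewrite diracE inI.
have inT k : (orbit k \in @doubling R @^-1` B) = (orbit k.+1 \in B).
  by apply/idP/idP => /set_mem ?; apply: mem_set.
under eq_bigr do rewrite inT.
rewrite [LHS]big_ord_recr [RHS]big_ord_recl a_periodic addrC.
by congr (_ + _); apply: eq_bigr.
Qed.

Lemma ge0_integral_periodic_orbit (f : R -> \bar R) : measurable_fun I01 f ->
  (forall x, I01 x -> 0 <= f x) ->
  \int[periodic_orbit_measure]_(x in I01) f x =
  (n.+1%:R^-1)%:E * (\sum_(k < n.+1) f (orbit k))%R.
Proof.
move=> mf f0; have mI01 : measurable I01 := measurable_itv _.
rewrite ge0_integral_mscale // ge0_integral_measure_sum //; congr (_ * _).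
apply: eq_bigr => k _.
by rewrite integral_dirac // diracE (mem_set (orbit_itv01 k)) mul1e.
Qed.

End periodic_orbit_measure.

Section example.
Context {R : realType}.
Local Notation I01 := `[0%R : R, 1%R]%classic.

Lemma continuous_quadratic (c0 c1 c2 : R) (f : R -> R) :
  (forall x, f x = c0 + c1 * x + c2 * x ^+ 2) -> continuous f.
Proof.
move=> fE; have -> : f = horner (c0%:P + c1 *: 'X + c2 *: 'X^2).
  by apply/funext => x; rewrite fE !hornerE.
by move=> x; apply: continuous_horner.
Qed.

Lemma continuous_A0 : continuous (@A0 R).
Proof.
by apply: (continuous_quadratic (c0 := - 9^-1) (c1 := 2/3) (c2 := -1)) => x;
  rewrite /A0; field.
Qed.

Lemma continuous_V0 : continuous (@V0 R).
Proof.
have cV1 : continuous (@V1 R).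
  by apply: (continuous_quadratic (c0 := 10/63) (c1 := -(2/21)) (c2 := -3^-1)) => x;
    rewrite /V1; field.
have cV2 : continuous (@V2 R).
  by apply: (continuous_quadratic (c0 := 5/63) (c1 := 2/7) (c2 := -3^-1)) => x;
    rewrite /V2; field.
have cV3 : continuous (@V3 R).
  by apply: (continuous_quadratic (c0 := 0) (c1 := 10/21) (c2 := -3^-1)) => x;
    rewrite /V3; field.
have cV4 : continuous (@V4 R).
  by apply: (continuous_quadratic (c0 := -(5/63)) (c1 := 4/7) (c2 := -3^-1)) => x;
    rewrite /V4; field.
move=> x; apply: (continuous_max (f := fun y => Num.max (V1 y) (V2 y))
                                  (g := fun y => Num.max (V3 y) (V4 y))).
  exact: (continuous_max (cV1 x) (cV2 x)).
exact: (continuous_max (cV3 x) (cV4 x)).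
Qed.

Ltac lra_bool := first [ apply/andP; split; lra_bool
                        | apply/orP; first [ left; lra_bool | right; lra_bool ]
                        | lra ].

Lemma V0_calibration (x : R) : 0 <= x <= 1 ->
  V0 x = Num.max (A0 (tau1 x) + V0 (tau1 x)) (A0 (tau2 x) + V0 (tau2 x)) + 2/63.
Proof.
move=> /andP[x0 x1].
(* All compositions share the quadratic part -x^2/3 of the pieces: tau1 maps
   V1, V2, V3 to V2, V3, V4, tau2 maps V3 to V1, and the other four
   compositions are dominated on [0, 1]. *)
have e11 : A0 (tau1 x) + V1 (tau1 x) + 2/63 = V2 x.
  by rewrite /A0 /V1 /V2 /tau1; field.
have e12 : A0 (tau1 x) + V2 (tau1 x) + 2/63 = V3 x.
  by rewrite /A0 /V2 /V3 /tau1; field.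
have e13 : A0 (tau1 x) + V3 (tau1 x) + 2/63 = V4 x.
  by rewrite /A0 /V3 /V4 /tau1; field.
have e14 : A0 (tau1 x) + V4 (tau1 x) + 2/63 = V4 x - (5/3 - x) / 21.
  by rewrite /A0 /V4 /tau1; field.
have e21 : A0 (tau2 x) + V1 (tau2 x) + 2/63 = V1 x - 8/63 - 2 * x / 7.
  by rewrite /A0 /V1 /tau2; field.
have e22 : A0 (tau2 x) + V2 (tau2 x) + 2/63 = V1 x - 1/63 - 2 * x / 21.
  by rewrite /A0 /V1 /V2 /tau2; field.
have e23 : A0 (tau2 x) + V3 (tau2 x) + 2/63 = V1 x.
  by rewrite /A0 /V1 /V3 /tau2; field.
have e24 : A0 (tau2 x) + V4 (tau2 x) + 2/63 = V1 x + (x - 2/3) / 21.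
  by rewrite /A0 /V1 /V4 /tau2; field.
have V21 : V2 x - V1 x = (24 * x - 5) / 63 by rewrite /V1 /V2; field.
rewrite /V0 !addr_maxr !addr_maxl e11 e12 e13 e14 e21 e22 e23 e24.
apply/eqP; rewrite eq_le !ge_max !le_max.
have [x23|x23] := lerP x (2/3); lra_bool.
Qed.

Lemma A0_V0_subaction (x : R) : I01 x -> A0 x + V0 x + 2/63 <= V0 (doubling x).
Proof.
rewrite /= in_itv /= => /andP[x0 x1].
have [x_lt1|x_ge1] := ltrP x 1.
  rewrite -[2/63]opprK; apply: calibrated_le_doubling; last by rewrite x0.
  by move=> y /V0_calibration ->; rewrite opprK.
(* T 1 = 0, but 1 is neither tau1 0 nor tau2 0. *)
have -> : x = 1 by apply/le_anti; rewrite x1.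
have V0_1 : V0 1 <= 10/63 :> R.
  by rewrite /V0 /V1 /V2 /V3 /V4 expr1n !ge_max; lra_bool.
have V0_0 : 10/63 <= V0 0 :> R.
  by rewrite /V0 /V1 /V2 /V3 /V4 expr0n /= !mulr0 !mul0r !le_max; lra_bool.
have A0_1 : A0 1 = - (4/9) :> R by rewrite /A0; field.
rewrite doubling1; lra.
Qed.

Lemma doubling_one_seventh : doubling (1/7 : R) = 2/7.
Proof. by rewrite doublingE_small; [field | apply/andP; split; lra]. Qed.

Lemma doubling_two_sevenths : doubling (2/7 : R) = 4/7.
Proof. by rewrite doublingE_small; [field | apply/andP; split; lra]. Qed.

Lemma doubling_four_sevenths : doubling (4/7 : R) = 1/7.
Proof. by rewrite doublingE_large; [field | apply/andP; split; lra]. Qed.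

Lemma doubling_orbit_one_seventh : iter 3 (@doubling R) (1/7) = 1/7.
Proof.
by rewrite /= doubling_one_seventh doubling_two_sevenths doubling_four_sevenths.
Qed.

Lemma integral_A0_orbit_one_seventh :
  (\int[periodic_orbit_measure 2 (1/7 : R)]_(x in I01) (A0 x)%:E = (- (2/63))%:E)%E.
Proof.
have nA0_ge0 (y : R) : 0 <= - A0 y by rewrite /A0 opprK sqr_ge0.
have cnA0 : continuous (fun y => - A0 y : R).
  by move=> y; apply: continuousN; exact: continuous_A0.
rewrite (eq_integral (fun y => - (- A0 y)%:E)%E); last first.
  by move=> y _; rewrite -EFinN opprK.
rewrite integral_ge0N; last by move=> y _; rewrite lee_fin nA0_ge0.
rewrite (ge0_integral_periodic_orbit doubling_orbit_one_seventh) //.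
- rewrite !big_ord_recr big_ord0 /= doubling_one_seventh doubling_two_sevenths /A0.
  by congr (_%:E); field.
- apply/measurable_EFinP; apply: measurable_funTS.
  exact: continuous_measurable_fun cnA0.
- by move=> y _; rewrite lee_fin nA0_ge0.
Qed.

End example.

Theorem mainTheorem2 (R : realType) :
  m_erg (@A0 R) = (- (2 / 63))%:E /\ calibrated_subaction (@A0 R) (@V0 R).
Proof.
have m_A0 : m_erg (@A0 R) = (- (2 / 63))%:E.
  apply/le_anti/andP; split.
    exact: m_erg_le_of_subaction continuous_A0 continuous_V0 A0_V0_subaction.
  rewrite -integral_A0_orbit_one_seventh; apply: integral_le_m_erg.
  exact: periodic_orbit_measure_invariant doubling_orbit_one_seventh.
split => //; split; first exact: continuous_subspaceT continuous_V0.
by move=> x; rewrite in_itv /= m_A0 /= opprK; exact: V0_calibration.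
Qed.
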